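(* Let $\varepsilon>0$ and let $G$ be a graph on $n$ vertices such that no subgraph of $G$ with at least $n/2$ vertices is an $\varepsilon$-expander (i.e. $G$ is $(n/2,\varepsilon)$-bounded). Then $G$ has a $(2\varepsilon n/3,\,2/3)$-separator.
   Context: For a graph $G'=(V',E')$ and $U\subseteq V'$, $N(U)$ is the set of vertices of $V'\setminus U$ adjacent in $G'$ to some vertex of $U$; $G'$ is an $\varepsilon$-expander if $|N(U)|\ge\varepsilon|U|$ for all $U\subseteq V'$ with $|U|\le|V'|/2$. For a real $s\ge0$ and $\tfrac12\le\alpha<1$, a set $S\subseteq V$ is an $(s,\alpha)$-separator of $G=(V,E)$ if there are $A,B\subseteq V$ with $V=A\,\dot\cup\,B\,\dot\cup\,S$, $|S|\le s$, $|A|,|B|\le\alpha|V|$, and no edge of $G$ between $A$ and $B$. *)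

From mathcomp Require Import all_boot all_order all_algebra.
Set Implicit Arguments. Unset Strict Implicit. Unset Printing Implicit Defensive.
Import Order.TTheory GRing.Theory Num.Theory.
Local Open Scope ring_scope.

Definition simple_graph (T : finType) (e : rel T) : Prop :=
  symmetric e /\ irreflexive e.

Definition subgraph (T : finType) (e : rel T) (V' : {set T}) (e' : rel T) : Prop :=
  simple_graph e' /\ forall x y, e' x y -> [/\ e x y, x \in V' & y \in V'].

Definition nbhd (T : finType) (V' : {set T}) (e' : rel T) (U : {set T}) : {set T} :=
  [set y in V' :\: U | [exists x in U, e' x y]].

Definition expander (R : realFieldType) (eps : R) (T : finType)
    (V' : {set T}) (e' : rel T) : Prop :=
  forall U : {set T}, U \subset V' -> (2 * #|U| <= #|V'|)%N ->
    eps * (#|U|%:R) <= (#|nbhd V' e' U|%:R).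

Definition separator (R : realFieldType) (T : finType) (e : rel T)
    (s alpha : R) (S : {set T}) : Prop :=
  exists A B : {set T},
    [disjoint A & B] /\ [disjoint A & S] /\ [disjoint B & S] /\
    A :|: B :|: S = setT /\
    #|S|%:R <= s /\ #|A|%:R <= alpha * #|T|%:R /\ #|B|%:R <= alpha * #|T|%:R /\
    (forall x y, x \in A -> y \in B -> ~~ e x y).

(* Greedy peeling.  Keep a partition A, B, S = V \ (A u B) with no edge between
   A and B, |S| <= eps |A| and |A| <= 2n/3.  While |B| > 2n/3 >= n/2, the graph
   induced on B is not an eps-expander, so some U in B with |U| <= |B|/2 has
   |N_B(U)| < eps |U|; moving U into A and N_B(U) into S keeps the invariant
   (|A| + |U| <= n - |B|/2 < 2n/3) and shrinks B.  When |B| <= 2n/3 the set S is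
   the separator, as |S| <= eps |A| <= 2 eps n/3. *)

From mathcomp Require Import all_boot all_order all_algebra.
From mathcomp Require Import zify lra.
Set Implicit Arguments. Unset Strict Implicit. Unset Printing Implicit Defensive.
Import Order.TTheory GRing.Theory Num.Theory.
Local Open Scope ring_scope.

Lemma cardsU_disjoint (T : finType) (A B : {set T}) :
  [disjoint A & B] -> #|A :|: B| = (#|A| + #|B|)%N.
Proof. by move=> dAB; apply/eqP; rewrite (eq_leqif (leq_card_setU A B)). Qed.

Lemma card_disjoint_le (T : finType) (A B : {set T}) :
  [disjoint A & B] -> (#|A| + #|B| <= #|T|)%N.
Proof. by move=> dAB; rewrite -cardsU_disjoint ?max_card. Qed.

Definition induced (T : finType) (e : rel T) (B : {set T}) : rel T :=
  [rel x y | [&& e x y, x \in B & y \in B]].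

Lemma induced_subgraph (T : finType) (e : rel T) (B : {set T}) :
  simple_graph e -> subgraph e B (induced e B).
Proof.
move=> [sym irr]; split; last by move=> x y /and3P[].
split=> [x y | x]; rewrite /induced /= ?irr //.
by rewrite sym; case: (x \in B) (y \in B) => [] [].
Qed.

Lemma not_expanderP (R : realFieldType) (eps : R) (T : finType)
    (V' : {set T}) (e' : rel T) :
  ~ expander eps V' e' ->
  exists U : {set T}, [/\ U \subset V', (2 * #|U| <= #|V'|)%N
                        & #|nbhd V' e' U|%:R < eps * #|U|%:R].
Proof.
move=> nexp.
have [/forallP expV | /forallPn[U]] :=
  boolP [forall U : {set T}, (U \subset V') ==> (2 * #|U| <= #|V'|)%N ==>
                             (eps * #|U|%:R <= #|nbhd V' e' U|%:R)].
  by case: nexp => U sUV hU; have /implyP/(_ sUV)/implyP/(_ hU) := expV U.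
by rewrite !negb_imply -ltNge => /and3P[sUV hU hN]; exists U.
Qed.

Section Peeling.
Variables (R : realFieldType) (eps : R) (T : finType) (e : rel T).

Definition partial_separator (A B : {set T}) : Prop :=
  [/\ [disjoint A & B], (forall x y, x \in A -> y \in B -> ~~ e x y),
      #|~: (A :|: B)|%:R <= eps * #|A|%:R & (3 * #|A| <= 2 * #|T|)%N].

Lemma partial_separator0 : partial_separator set0 setT.
Proof.
split; first by rewrite disjoints_subset sub0set.
- by move=> x y; rewrite inE.
- by rewrite set0U setCT cards0 mulr0.
- by rewrite cards0.
Qed.

Lemma partial_separator_complete (A B : {set T}) :
  0 <= eps -> partial_separator A B -> (3 * #|B| <= 2 * #|T|)%N ->
  separator e (2 * eps * #|T|%:R / 3) (2 / 3) (~: (A :|: B)).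
Proof.
move=> eps_ge0 [dAB noAB hS hA] hB.
have [hA' hB'] : 3 * #|A|%:R <= 2 * #|T|%:R :> R /\
                 3 * #|B|%:R <= 2 * #|T|%:R :> R.
  by split; rewrite -!natrM ler_nat.
exists A, B; split=> //.
split; first by rewrite disjoints_subset setCK subsetUl.
split; first by rewrite disjoints_subset setCK subsetUr.
split; first by rewrite setUCr.
by do 3 (split; first by nra).
Qed.

Lemma partial_separator_peel (A B U : {set T}) :
  partial_separator A B -> (2 * #|T| < 3 * #|B|)%N ->
  U \subset B -> (2 * #|U| <= #|B|)%N ->
  #|nbhd B (induced e B) U|%:R < eps * #|U|%:R ->
  let N := nbhd B (induced e B) U in
  partial_separator (A :|: U) (B :\: (U :|: N)) /\ (#|B :\: (U :|: N)| < #|B|)%N.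
Proof.
move=> [dAB noAB hS hA] hB sUB hU hN N.
have dAU : [disjoint A & U] := disjointWr sUB dAB.
have cardAB := card_disjoint_le dAB.
have U_gt0 : (0 < #|U|)%N.
  by rewrite lt0n; apply: contraTneq hN => ->; rewrite mulr0 ltNge ler0n.
split; first split.
- rewrite disjoints_subset; apply/subsetP => x; rewrite !inE.
  by case/orP=> [xA | ->]; rewrite ?(disjointFr dAB xA) ?andbF.
- move=> x y; rewrite !inE => /orP[xA | xU] /andP[yUN yB]; first exact: noAB.
  apply: contra yUN => exy; have [//|yU] := boolP (y \in U).
  rewrite yB; apply/existsP; exists x.
  by rewrite xU /induced /= exy (subsetP sUB x xU) yB.
- have sub : ~: (A :|: U :|: B :\: (U :|: N)) \subset ~: (A :|: B) :|: N.
    apply/subsetP => z; rewrite !(in_setC, in_setU, in_setD).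
    case: (z \in N); rewrite ?orbT //.
    by case: (z \in A) (z \in U) (z \in B) => [] [] [].
  have hS' : #|~: (A :|: U :|: B :\: (U :|: N))|%:R
             <= #|~: (A :|: B)|%:R + #|N|%:R :> R.
    by rewrite -natrD ler_nat (leq_trans (subset_leq_card sub)) ?leq_card_setU.
  by rewrite cardsU_disjoint // natrD mulrDr; lra.
- rewrite cardsU_disjoint //; lia.
- have cardUN : (#|U| <= #|B :&: (U :|: N)|)%N.
    by apply: subset_leq_card; rewrite subsetI sUB subsetUl.
  have := cardsID (U :|: N) B; lia.
Qed.

Hypotheses (eps_ge0 : 0 <= eps) (e_simple : simple_graph e).
Hypothesis no_large_expander : forall (V' : {set T}) (e' : rel T),
  subgraph e V' e' -> (#|T| <= 2 * #|V'|)%N -> ~ expander eps V' e'.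

Lemma partial_separator_extends (A B : {set T}) : partial_separator A B ->
  exists S : {set T}, separator e (2 * eps * #|T|%:R / 3) (2 / 3) S.
Proof.
elim: {B}_.+1 {-2}B (ltnSn #|B|) A => // m IH B ltBm A partAB.
have [hB | hB] := leqP (3 * #|B|) (2 * #|T|).
  by exists (~: (A :|: B)); apply: partial_separator_complete.
have [|U [sUB hU hN]] :=
  not_expanderP (no_large_expander (induced_subgraph B e_simple) _); first lia.
have [partAU ltB] := partial_separator_peel partAB hB sUB hU hN.
exact: IH _ (leq_trans ltB ltBm) _ partAU.
Qed.

End Peeling.

Theorem lemma11 (R : realFieldType) (eps : R) (T : finType) (e : rel T) :
  0 < eps ->
  simple_graph e ->
  (forall (V' : {set T}) (e' : rel T), subgraph e V' e' ->
     (#|T| <= 2 * #|V'|)%N -> ~ expander eps V' e') ->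
  exists S : {set T}, separator e (2 * eps * #|T|%:R / 3) (2 / 3) S.
Proof.
move=> eps_gt0 e_simple no_large_expander.
exact: partial_separator_extends (ltW eps_gt0) e_simple no_large_expander _ _
  (partial_separator0 eps e).
Qed.
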